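(* Let $k\approx 7.25054$ be the positive real root of $2x^6-13x^5-11x^4+6x^2+x-1=0$. In the triangle $ABC$ with $a=1$ and $b=c=k$, the triangle centers $X_{12}$ and $X_{15}$ coincide.
   Context: $X_n$ denotes the $n$-th triangle center listed in Kimberling's Encyclopedia of Triangle Centers (ETC), given by barycentric coordinates in terms of $a=BC$, $b=CA$, $c=AB$. *)

From Stdlib Require Import Reals Lra.
Open Scope R_scope.

(* Barycentric triples (unnormalized homogeneous coordinates). *)
Definition bary : Type := (R * R * R)%type.

(* Area S-notation (Conway): S = 2 * area, S_A = (b^2+c^2-a^2)/2. *)
Definition conwayS (a b c : R) : R :=
  sqrt ((a+b+c) * (-a+b+c) * (a-b+c) * (a+b-c)) / 2.
Definition conwaySA (a b c : R) : R := (b^2 + c^2 - a^2) / 2.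

Definition X12 (a b c : R) : bary :=
  ((b+c)^2 / (b+c-a), (c+a)^2 / (c+a-b), (a+b)^2 / (a+b-c)).

Definition X15 (a b c : R) : bary :=
  (a^2 * (sqrt 3 * conwaySA a b c + conwayS a b c),
   b^2 * (sqrt 3 * conwaySA b c a + conwayS a b c),
   c^2 * (sqrt 3 * conwaySA c a b + conwayS a b c)).

Definition bsum (p : bary) : R := let '(x, y, z) := p in x + y + z.

Definition bnorm (p : bary) : bary :=
  let '(x, y, z) := p in (x / bsum p, y / bsum p, z / bsum p).

Definition same_point (p q : bary) : Prop :=
  bsum p <> 0 /\ bsum q <> 0 /\ bnorm p = bnorm q.

(* Both centers of the isosceles triangle (1, k, k) lie on its axis of symmetry, so they
   coincide once the ratio of their first to their second barycentric coordinate agrees.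
   Clearing denominators, that is  sqrt 3 * P = sqrt (4 k^2 - 1) * Q  for two polynomials
   P, Q in k which are both negative when k > 7.  The squared equation
   3 P^2 = (4 k^2 - 1) Q^2  holds because 3 P^2 - (4 k^2 - 1) Q^2 is a multiple of the
   sextic, and the positive root of the sextic exceeds 7, so the signs match as well. *)

From Stdlib Require Import Reals Lra.
Open Scope R_scope.

Definition bscale (l : R) (p : bary) : bary :=
  let '(x, y, z) := p in (l * x, l * y, l * z).

Lemma bsum_scale (l : R) (p : bary) : bsum (bscale l p) = l * bsum p.
Proof. destruct p as [[x y] z]; simpl; ring. Qed.

Lemma bnorm_scale (l : R) (p : bary) :
  l <> 0 -> bsum p <> 0 -> bnorm (bscale l p) = bnorm p.
Proof.
  intros Hl Hp; unfold bnorm; rewrite bsum_scale.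
  destruct p as [[x y] z]; simpl.
  f_equal; [f_equal |]; field; auto.
Qed.

Lemma same_point_scale (l : R) (p : bary) :
  l <> 0 -> bsum p <> 0 -> same_point p (bscale l p).
Proof.
  intros Hl Hp; repeat split; auto.
  - rewrite bsum_scale; apply Rmult_integral_contrapositive; auto.
  - symmetry; apply bnorm_scale; auto.
Qed.

Lemma same_point_axial (x1 y1 x2 y2 : R) :
  y1 <> 0 -> y2 <> 0 -> x1 + y1 + y1 <> 0 -> x1 * y2 = x2 * y1 ->
  same_point (x1, y1, y1) (x2, y2, y2).
Proof.
  intros Hy1 Hy2 Hs Hx.
  replace (x2, y2, y2) with (bscale (y2 / y1) (x1, y1, y1)).
  - apply same_point_scale; auto.
    apply Rmult_integral_contrapositive; split; auto; apply Rinv_neq_0_compat; auto.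
  - simpl; f_equal; [f_equal |]; field_simplify_eq; auto; lra.
Qed.

Lemma X12_isosceles (k : R) :
  X12 1 k k = (4 * k^2 / (2 * k - 1), (k + 1)^2, (k + 1)^2).
Proof.
  unfold X12.
  replace (k + 1 - k) with 1 by ring; replace (1 + k - k) with 1 by ring.
  f_equal; [f_equal; [f_equal; ring |] |]; field.
Qed.

Lemma X15_isosceles (k : R) :
  X15 1 k k =
  ((sqrt 3 * (2 * k^2 - 1) + sqrt (4 * k^2 - 1)) / 2,
   k^2 * (sqrt 3 + sqrt (4 * k^2 - 1)) / 2,
   k^2 * (sqrt 3 + sqrt (4 * k^2 - 1)) / 2).
Proof.
  unfold X15, conwayS, conwaySA.
  replace ((1 + k + k) * (- (1) + k + k) * (1 - k + k) * (1 + k - k)) with (4 * k^2 - 1)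
    by ring.
  f_equal; [f_equal |]; field.
Qed.

Lemma sqrt_mul_eq_of_sqr (u v a b : R) :
  0 <= u -> 0 <= v -> 0 <= a * b -> u * a^2 = v * b^2 ->
  sqrt u * a = sqrt v * b.
Proof.
  intros Hu Hv Hab Hsq.
  pose proof (sqrt_pos u); pose proof (sqrt_pos v).
  pose proof (sqrt_sqrt u Hu); pose proof (sqrt_sqrt v Hv).
  assert (Hprod : (sqrt u * a - sqrt v * b) * (sqrt u * a + sqrt v * b) = 0) by nra.
  assert (0 <= (sqrt u * a) * (sqrt v * b)).
  { replace ((sqrt u * a) * (sqrt v * b)) with ((sqrt u * sqrt v) * (a * b)) by ring.
    apply Rmult_le_pos; auto; apply Rmult_le_pos; auto. }
  destruct (Rmult_integral _ _ Hprod); nra.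
Qed.

Definition sextic (k : R) : R := 2 * k^6 - 13 * k^5 - 11 * k^4 + 6 * k^2 + k - 1.

Lemma isodynamic_balance_sqr (k : R) :
  3 * (4 * k^4 - (2 * k - 1) * (k + 1)^2 * (2 * k^2 - 1))^2
  - (4 * k^2 - 1) * ((2 * k - 1) * (k + 1)^2 - 4 * k^4)^2 =
  sextic k * (-4 - 4 * k + 12 * k^2 + 4 * k^3 - 8 * k^4).
Proof. unfold sextic; ring. Qed.

Section SexticRoot.

Variable k : R.

Lemma sextic_neg_small : 0 < k <= 3/10 -> sextic k < 0.
Proof.
  intros [H0 H1]; unfold sextic.
  assert (0 < k^5) by (apply pow_lt; lra).
  assert (0 < k^4) by (apply pow_lt; lra).
  assert (k^6 = k * k^5) by ring.
  nra.
Qed.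

(* The sextic comes within 0.01 of zero near 9/20, so crude bounds fail there; we expand it
   to second order at 9/20, where the quadratic remainder factor is negative on [0, 1]. *)
Lemma sextic_neg_middle : 3/10 <= k <= 1 -> sextic k < 0.
Proof.
  intros [H0 H1].
  assert (Htaylor : sextic k =
    (-299129/32000000 - 21389/400000 * (k - 9/20)) +
    (k - 9/20)^2 * (2 * k^4 - 56/5 * k^3 - 4297/200 * k^2 - 34137/2000 * k - 3207/640))
    by (unfold sextic; field).
  assert (0 <= k^3) by (apply pow_le; lra).
  assert (k^4 <= k^3) by (simpl; nra).
  assert (0 <= (k - 9/20)^2) by apply pow2_ge_0.
  nra.
Qed.

Lemma sextic_neg_large : 1 <= k <= 7 -> sextic k < 0.
Proof.
  intros [H0 H1]; unfold sextic.
  assert (k^4 = k^2 * k^2) by ring.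
  assert (1 <= k^2) by nra.
  assert (2 * k^2 - 13 * k - 11 <= -4) by nra.
  assert (2 * k^6 - 13 * k^5 - 11 * k^4 = k^4 * (2 * k^2 - 13 * k - 11)) by ring.
  nra.
Qed.

Lemma sextic_root_gt_7 : 0 < k -> sextic k = 0 -> 7 < k.
Proof.
  intros Hk Hroot.
  destruct (Rlt_le_dec 7 k) as [| H7]; auto; exfalso.
  assert (sextic k < 0); [| lra].
  destruct (Rle_lt_dec k (3/10)); [apply sextic_neg_small; lra |].
  destruct (Rle_lt_dec k 1); [apply sextic_neg_middle | apply sextic_neg_large]; lra.
Qed.

Lemma isodynamic_balance : 7 < k -> sextic k = 0 ->
  sqrt 3 * (4 * k^4 - (2 * k - 1) * (k + 1)^2 * (2 * k^2 - 1)) =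
  sqrt (4 * k^2 - 1) * ((2 * k - 1) * (k + 1)^2 - 4 * k^4).
Proof.
  intros Hk Hroot.
  apply sqrt_mul_eq_of_sqr.
  - lra.
  - nra.
  - assert (HP : 4 * k^4 - (2 * k - 1) * (k + 1)^2 * (2 * k^2 - 1) < 0).
    { assert (k^3 * k^2 <= (2 * k - 1) * (k + 1)^2 * (2 * k^2 - 1))
        by (apply Rmult_le_compat; nra).
      nra. }
    assert (HQ : (2 * k - 1) * (k + 1)^2 - 4 * k^4 < 0).
    { assert (k^4 = k^2 * k^2) by ring.
      nra. }
    nra.
  - pose proof (isodynamic_balance_sqr k) as Hsqr.
    rewrite Hroot, Rmult_0_l in Hsqr; lra.
Qed.

End SexticRoot.

Theorem theorem3p4 (k : R) :
  0 < k ->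
  2 * k^6 - 13 * k^5 - 11 * k^4 + 6 * k^2 + k - 1 = 0 ->
  same_point (X12 1 k k) (X15 1 k k).
Proof.
  intros Hk Hroot.
  pose proof (sextic_root_gt_7 k Hk Hroot) as Hk7.
  pose proof (isodynamic_balance k Hk7 Hroot) as Hbal.
  pose proof (sqrt_lt_R0 3 ltac:(lra)).
  pose proof (sqrt_pos (4 * k^2 - 1)).
  assert (0 < (k + 1)^2) by nra.
  assert (0 < k^2 * (sqrt 3 + sqrt (4 * k^2 - 1)) / 2)
    by (apply Rdiv_lt_0_compat; [apply Rmult_lt_0_compat |]; nra).
  assert (0 < 4 * k^2 / (2 * k - 1)) by (apply Rdiv_lt_0_compat; nra).
  rewrite X12_isosceles, X15_isosceles.
  apply same_point_axial; try lra.
  field_simplify_eq; [nra | lra].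
Qed.
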